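(* Let $Y,\widehat{Y},A$ be $\{0,1\}$-valued random variables on a common probability space with $\Pr\{A=a,Y=y\}>0$ for all $a,y$, and let $\ell:\{0,1\}^2\to\mathbb{R}$ be a loss function. Consider the optimization problem $$\min_{\widetilde{Y}}\ \mathbb{E}\,\ell(\widetilde{Y},Y)\quad\text{s.t.}\quad \gamma_a(\widetilde{Y})\in P_a(\widehat{Y})\ \text{for all } a\in\{0,1\},\qquad \gamma_0(\widetilde{Y})=\gamma_1(\widetilde{Y}),$$ where $\widetilde{Y}$ ranges over predictors derived from $(\widehat{Y},A)$, parametrized by the four numbers $\Pr\{\widetilde{Y}=1\mid\widehat{Y}=\hat y,A=a\}\in[0,1]$. This problem is a linear program in these four variables whose coefficients can be computed from the joint distribution of $(\widehat{Y},A,Y)$. Moreover, its solution is an optimal equalized odds predictor derived from $\widehat{Y}$ and $A$, i.e. it minimizes $\mathbb{E}\,\ell(\widetilde{Y},Y)$ among all predictors derived from $(\widehat{Y},A)$ that satisfy equalized odds.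
   Context: For a $\{0,1\}$-valued predictor $Z$ and $a\in\{0,1\}$, $\gamma_a(Z)=\left(\Pr\{Z=1\mid A=a,Y=0\},\ \Pr\{Z=1\mid A=a,Y=1\}\right)$, and $P_a(\widehat{Y})=\mathrm{convhull}\{(0,0),\gamma_a(\widehat{Y}),\gamma_a(1-\widehat{Y}),(1,1)\}$. A predictor is derived from $(\widehat{Y},A)$ if it is a possibly randomized function of $(\widehat{Y},A)$ alone (randomness independent of everything else). A predictor $\widetilde{Y}$ satisfies equalized odds (with respect to $A$ and $Y$) if $\widetilde{Y}$ and $A$ are independent conditional on $Y$; for binary variables this is equivalent to $\gamma_0(\widetilde{Y})=\gamma_1(\widetilde{Y})$. *)

From mathcomp Require Import all_boot all_order all_algebra.
Set Implicit Arguments. Unset Strict Implicit. Unset Printing Implicit Defensive.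
Import Order.TTheory GRing.Theory Num.Theory.
Local Open Scope ring_scope.

Section Defs.
Variable R : realFieldType.

Definition is_pmf (S : finType) (mu : S -> R) : Prop :=
  (forall s, 0 <= mu s) /\ \sum_s mu s = 1.

Definition pr (S : finType) (mu : S -> R) (E : pred S) : R :=
  \sum_(s | E s) mu s.

Definition cpr (S : finType) (mu : S -> R) (E F : pred S) : R :=
  pr mu [pred s | E s && F s] / pr mu F.

Definition gamma (S : finType) (mu : S -> R) (A Y Z : S -> bool) (a : bool)
  : R * R :=
  (cpr mu [pred s | Z s] [pred s | (A s == a) && (Y s == false)],
   cpr mu [pred s | Z s] [pred s | (A s == a) && (Y s == true)]).

(* convex hull of the four points (0,0), p1, p2, (1,1) in R^2 *)
Definition convhull4 (p1 p2 : R * R) (x : R * R) : Prop :=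
  exists l0 l1 l2 l3 : R,
    [/\ 0 <= l0, 0 <= l1, 0 <= l2, 0 <= l3 & l0 + l1 + l2 + l3 = 1] /\
    x = (l1 * p1.1 + l2 * p2.1 + l3, l1 * p1.2 + l2 * p2.2 + l3).

Definition Pa (S : finType) (mu : S -> R) (A Y Yh : S -> bool) (a : bool)
  : R * R -> Prop :=
  convhull4 (gamma mu A Y Yh a) (gamma mu A Y (fun s => ~~ Yh s) a).

(* A predictor derived from (Yhat, A) with parameters
   q yh a = Pr{Ytilde = 1 | Yhat = yh, A = a}: the sample space is extended
   by an independent coin, Ytilde is the second component. *)
Definition derived_mass (S : finType) (mu : S -> R) (Yh A : S -> bool)
  (q : bool -> bool -> R) : S * bool -> R :=
  fun sb => mu sb.1 * (if sb.2 then q (Yh sb.1) (A sb.1)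
                       else 1 - q (Yh sb.1) (A sb.1)).

Definition Ytilde (S : finType) : S * bool -> bool := fun sb => sb.2.
Definition lift_fst (S : finType) (X : S -> bool) : S * bool -> bool :=
  fun sb => X sb.1.

Definition exp_loss (S : finType) (mu : S -> R) (l : bool -> bool -> R)
  (Z Y : S -> bool) : R :=
  \sum_s mu s * l (Z s) (Y s).

(* Equalized odds: Z and A are independent conditionally on Y:
   Pr{Z=t, A=a | Y=y} = Pr{Z=t | Y=y} Pr{A=a | Y=y} for all t, a, y
   (written multiplied through by Pr{Y=y}^2). *)
Definition eq_odds (S : finType) (mu : S -> R) (A Y Z : S -> bool) : Prop :=
  forall t a y : bool,
    pr mu [pred s | [&& Z s == t, A s == a & Y s == y]] *
      pr mu [pred s | Y s == y]
    = pr mu [pred s | (Z s == t) && (Y s == y)] *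
      pr mu [pred s | (A s == a) && (Y s == y)].

Definition param_ok (q : bool -> bool -> R) : Prop :=
  forall yh a, 0 <= q yh a <= 1.

Definition derived_loss (S : finType) (mu : S -> R) (Yh A Y : S -> bool)
  (l : bool -> bool -> R) (q : bool -> bool -> R) : R :=
  exp_loss (derived_mass mu Yh A q) l (@Ytilde S) (lift_fst Y).

Definition derived_gamma (S : finType) (mu : S -> R) (Yh A Y : S -> bool)
  (q : bool -> bool -> R) (a : bool) : R * R :=
  gamma (derived_mass mu Yh A q) (lift_fst A) (lift_fst Y) (@Ytilde S) a.

Definition feasible (S : finType) (mu : S -> R) (Yh A Y : S -> bool)
  (q : bool -> bool -> R) : Prop :=
  [/\ param_ok q,
      (forall a, Pa mu A Y Yh a (derived_gamma mu Yh A Y q a)) &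
      derived_gamma mu Yh A Y q false = derived_gamma mu Yh A Y q true].

Definition solves (S : finType) (mu : S -> R) (Yh A Y : S -> bool)
  (l : bool -> bool -> R) (q : bool -> bool -> R) : Prop :=
  feasible mu Yh A Y q /\
  forall q', feasible mu Yh A Y q' ->
    derived_loss mu Yh A Y l q <= derived_loss mu Yh A Y l q'.

Definition joint (S : finType) (mu : S -> R) (Yh A Y : S -> bool)
  (yh a y : bool) : R :=
  pr mu [pred s | [&& Yh s == yh, A s == a & Y s == y]].

End Defs.

From mathcomp Require Import all_boot all_order all_algebra.
From mathcomp Require Import ring lra.
Import Order.TTheory GRing.Theory Num.Theory.
Set Implicit Arguments. Unset Strict Implicit. Unset Printing Implicit Defensive.
Local Open Scope ring_scope.

(* Everything is a function of the joint law J of (Yhat, A, Y).  Given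
   (A, Y) = (a, y), the derived predictor equals 1 with probability
   sum_yh Pr{Yhat = yh | a, y} q yh a, so the expected loss and gamma_a(Ytilde)
   are affine in q.  As Pr{Yhat = 1 | a, y} + Pr{Yhat = 0 | a, y} = 1,
   gamma_a(Ytilde) = q 1 a gamma_a(Yhat) + q 0 a gamma_a(1 - Yhat) always lies in
   P_a(Yhat) when q is [0,1]-valued; and for binary variables equalized odds is
   exactly gamma_0 = gamma_1.  So the feasible set of the program is the set of
   equalized-odds derived predictors, and a solution is optimal among them. *)

Section Probability.
Variables (R : realFieldType) (S : finType) (mu : S -> R).

Lemma eq_pr (E F : pred S) : E =1 F -> pr mu E = pr mu F.
Proof. exact: eq_bigl. Qed.

Lemma prE (E : pred S) : pr mu E = \sum_s mu s * (E s)%:R.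
Proof.
rewrite /pr big_mkcond; apply: eq_bigr => s _.
by case: (E s); rewrite ?mulr1 ?mulr0.
Qed.

Lemma prID (X E : pred S) :
  pr mu E = pr mu [pred s | E s && X s] + pr mu [pred s | E s && ~~ X s].
Proof. exact: bigID. Qed.

Lemma sum_joint (X1 X2 X3 : S -> bool) (f : bool -> bool -> bool -> R) :
  \sum_s mu s * f (X1 s) (X2 s) (X3 s) =
  \sum_x1 \sum_x2 \sum_x3 joint mu X1 X2 X3 x1 x2 x3 * f x1 x2 x3.
Proof.
rewrite /joint /pr !big_bool /= !big_distrl /=.
rewrite !(big_mkcond (fun s => [&& _, _ & _])) -!big_split /=.
by apply: eq_bigr => s _; case: (X1 s) (X2 s) (X3 s) => [] [] [] /=; ring.
Qed.

End Probability.

(* [p t a] stands for Pr{Z = t, A = a} within a slice Y = y; the left-hand side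
   is independence of Z and A in that slice, multiplied out. *)
Lemma binary_cond_indepP (R : realFieldType) (p : bool -> bool -> R) :
  p true true + p false true != 0 -> p true false + p false false != 0 ->
  (forall t a, p t a * ((p true true + p false true) + (p true false + p false false))
               = (p t true + p t false) * (p true a + p false a)) <->
  p true false / (p true false + p false false) =
  p true true / (p true true + p false true).
Proof.
move=> m1_neq0 m0_neq0; split=> [/(_ true false) indep | ].
  by apply/eqP; rewrite eqr_div //; apply/eqP; lra.
move/eqP; rewrite eqr_div // => /eqP cross t a.
by case: t; case: a; lra.
Qed.

Section EqualizedOdds.
Variables (R : realFieldType) (S : finType) (mu : S -> R) (A Y Z : S -> bool).
Local Notation n := (joint mu Z A Y).

Lemma pr_AY a y :
  pr mu [pred s | (A s == a) && (Y s == y)] = n true a y + n false a y.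
Proof.
by rewrite (prID mu Z); congr (_ + _); apply: eq_pr => s /=;
  case: (Z s); rewrite /= ?andbT ?andbF.
Qed.

Lemma pr_ZY t y :
  pr mu [pred s | (Z s == t) && (Y s == y)] = n t true y + n t false y.
Proof.
by rewrite (prID mu A); congr (_ + _); apply: eq_pr => s /=;
  case: (A s); case: (Z s == t); rewrite /= ?andbT ?andbF.
Qed.

Lemma pr_Y y :
  pr mu [pred s | Y s == y] =
  pr mu [pred s | (A s == true) && (Y s == y)] +
  pr mu [pred s | (A s == false) && (Y s == y)].
Proof.
by rewrite (prID mu A); congr (_ + _); apply: eq_pr => s /=;
  case: (A s); rewrite /= ?andbT ?andbF.
Qed.

Lemma gamma_joint a :
  gamma mu A Y Z a =
  (n true a false / pr mu [pred s | (A s == a) && (Y s == false)],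
   n true a true / pr mu [pred s | (A s == a) && (Y s == true)]).
Proof.
by rewrite /gamma /cpr; congr (_ / _, _ / _); apply: eq_pr => s /=;
  case: (Z s).
Qed.

Hypothesis pr_AY_gt0 : forall a y, 0 < pr mu [pred s | (A s == a) && (Y s == y)].

Lemma eq_oddsP : eq_odds mu A Y Z <-> gamma mu A Y Z false = gamma mu A Y Z true.
Proof.
have m_neq0 a y : n true a y + n false a y != 0 by rewrite -pr_AY gt_eqF.
have indepP y :
  (forall t a,
     n t a y * ((n true true y + n false true y) + (n true false y + n false false y))
     = (n t true y + n t false y) * (n true a y + n false a y)) <->
  n true false y / (n true false y + n false false y) =
  n true true y / (n true true y + n false true y).
  exact: (binary_cond_indepP (p := fun t a => n t a y) (m_neq0 true y) (m_neq0 false y)).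
rewrite !gamma_joint !pr_AY /eq_odds; split=> [indep | [e0 e1] t a y].
  by congr pair; apply/indepP => t a;
    [move: (indep t a false) | move: (indep t a true)]; rewrite pr_Y pr_ZY !pr_AY.
by rewrite pr_Y pr_ZY !pr_AY; apply: (indepP y).2; case: y.
Qed.

End EqualizedOdds.

Lemma convhull4_mix (R : realFieldType) (p1 p2 : R * R) (u v : R) :
  0 <= u <= 1 -> 0 <= v <= 1 -> p1.1 + p2.1 = 1 -> p1.2 + p2.2 = 1 ->
  convhull4 p1 p2 (p1.1 * u + p2.1 * v, p1.2 * u + p2.2 * v).
Proof.
case: p1 p2 => [x1 y1] [x2 y2] /andP[u_ge0 u_le1] /andP[v_ge0 v_le1] /= sx sy.
have -> : x2 = 1 - x1 by lra.
have -> : y2 = 1 - y1 by lra.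
have [v_le_u | u_lt_v] := lerP v u.
  by exists (1 - u), (u - v), 0, v; split; [split; lra | congr pair => /=; ring].
by exists (1 - v), 0, (v - u), u; split; [split; lra | congr pair => /=; ring].
Qed.

Definition cond_yhat (R : realFieldType) (J : bool -> bool -> bool -> R)
  (a y yh : bool) : R :=
  J yh a y / (J true a y + J false a y).

Lemma cond_yhat_sum1 (R : realFieldType) (J : bool -> bool -> bool -> R) a y :
  J true a y + J false a y != 0 -> cond_yhat J a y true + cond_yhat J a y false = 1.
Proof. by move=> m_neq0; rewrite /cond_yhat -mulrDl divff. Qed.

Section DerivedPredictor.
Variables (R : realFieldType) (S : finType) (mu : S -> R) (Yh A Y : S -> bool).
Local Notation J := (joint mu Yh A Y).
Local Notation dm q := (derived_mass mu Yh A q).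

Lemma sum_derived_mass q (F : S * bool -> R) :
  \sum_sb dm q sb * F sb =
  \sum_s mu s * (q (Yh s) (A s) * F (s, true) + (1 - q (Yh s) (A s)) * F (s, false)).
Proof.
transitivity (\sum_s \sum_b dm q (s, b) * F (s, b)).
  by rewrite pair_bigA; apply: eq_bigr => -[].
by apply: eq_bigr => s _; rewrite big_bool /derived_mass /=; ring.
Qed.

Lemma pr_derived_lift q (E : pred S) : pr (dm q) [pred sb | E sb.1] = pr mu E.
Proof. by rewrite !prE sum_derived_mass; apply: eq_bigr => s _ /=; ring. Qed.

Lemma pr_derived_AY q a y :
  pr (dm q) [pred sb | (lift_fst A sb == a) && (lift_fst Y sb == y)] =
  pr mu [pred s | (A s == a) && (Y s == y)].
Proof. exact: (pr_derived_lift q [pred s | (A s == a) && (Y s == y)]). Qed.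

Lemma joint_derived q t a y :
  joint (dm q) (@Ytilde S) (lift_fst A) (lift_fst Y) t a y =
  \sum_yh J yh a y * (if t then q yh a else 1 - q yh a).
Proof.
rewrite {1}/joint prE sum_derived_mass.
rewrite (sum_joint mu Yh A Y (fun yh a' y' =>
  q yh a' * [&& true == t, a' == a & y' == y]%:R +
  (1 - q yh a') * [&& false == t, a' == a & y' == y]%:R)).
by rewrite !big_bool /=; case: t; case: a; case: y => /=; ring.
Qed.

Lemma derived_lossE q l :
  derived_loss mu Yh A Y l q =
  \sum_yh \sum_a \sum_y J yh a y * (l false y + (l true y - l false y) * q yh a).
Proof.
rewrite /derived_loss /exp_loss sum_derived_mass -sum_joint.
by apply: eq_bigr => s _; rewrite /Ytilde /lift_fst /=; ring.
Qed.

Lemma derived_gammaE q a :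
  derived_gamma mu Yh A Y q a =
  (\sum_yh cond_yhat J a false yh * q yh a, \sum_yh cond_yhat J a true yh * q yh a).
Proof.
rewrite /derived_gamma gamma_joint !joint_derived !pr_derived_AY !(pr_AY mu A Y Yh) /=.
by congr pair; rewrite big_distrl; apply: eq_bigr => yh _; rewrite /cond_yhat mulrAC.
Qed.

Lemma gamma_cond_yhat a :
  gamma mu A Y Yh a = (cond_yhat J a false true, cond_yhat J a true true).
Proof. by rewrite gamma_joint !(pr_AY mu A Y Yh). Qed.

Lemma gamma_negb_cond_yhat a :
  gamma mu A Y (fun s => ~~ Yh s) a =
  (cond_yhat J a false false, cond_yhat J a true false).
Proof.
rewrite gamma_joint !(pr_AY mu A Y Yh) /cond_yhat.
by congr (_ / _, _ / _); apply: eq_pr => s /=; case: (Yh s).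
Qed.

Hypothesis pr_AY_gt0 : forall a y, 0 < pr mu [pred s | (A s == a) && (Y s == y)].

Lemma derived_gamma_in_Pa q a :
  param_ok q -> Pa mu A Y Yh a (derived_gamma mu Yh A Y q a).
Proof.
move=> q_ok; rewrite /Pa derived_gammaE !big_bool gamma_cond_yhat gamma_negb_cond_yhat.
by apply: convhull4_mix => //=; apply: cond_yhat_sum1; rewrite -pr_AY gt_eqF.
Qed.

Lemma derived_eq_oddsP q :
  eq_odds (dm q) (lift_fst A) (lift_fst Y) (@Ytilde S) <->
  derived_gamma mu Yh A Y q false = derived_gamma mu Yh A Y q true.
Proof.
by apply: eq_oddsP => a y; rewrite pr_derived_AY.
Qed.

Lemma feasibleP q :
  param_ok q ->
  feasible mu Yh A Y q <-> eq_odds (dm q) (lift_fst A) (lift_fst Y) (@Ytilde S).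
Proof.
move=> q_ok; rewrite derived_eq_oddsP.
split=> [[] // | gamma_eq]; split=> // a; exact: derived_gamma_in_Pa.
Qed.

End DerivedPredictor.

Theorem proposition4p4 (R : realFieldType) :
  (* (i) the problem is a linear program in the four parameters q yh a:
     the objective and gamma_a(Ytilde) are affine in q, with coefficients
     given by fixed functions of the joint distribution of (Yhat, A, Y)
     (and of the loss) *)
  (exists (c0 : (bool -> bool -> bool -> R) -> (bool -> bool -> R) -> R)
          (c : (bool -> bool -> bool -> R) -> (bool -> bool -> R) ->
               bool -> bool -> R)
          (d : (bool -> bool -> bool -> R) -> bool -> bool -> bool -> R),
     forall (S : finType) (mu : S -> R) (Y Yh A : S -> bool)
            (l : bool -> bool -> R),
       is_pmf mu ->
       (forall a y : bool, 0 < pr mu [pred s | (A s == a) && (Y s == y)]) ->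
       forall q : bool -> bool -> R,
         derived_loss mu Yh A Y l q
           = c0 (joint mu Yh A Y) l + (\sum_(yh : bool) \sum_(a : bool)
                                    c (joint mu Yh A Y) l yh a * q yh a) /\
         forall a : bool,
           derived_gamma mu Yh A Y q a
             = ((\sum_(yh : bool) d (joint mu Yh A Y) a false yh * q yh a),
                (\sum_(yh : bool) d (joint mu Yh A Y) a true yh * q yh a))) /\
  (* (ii) any solution is an optimal equalized odds derived predictor *)
  (forall (S : finType) (mu : S -> R) (Y Yh A : S -> bool)
          (l : bool -> bool -> R),
     is_pmf mu ->
     (forall a y : bool, 0 < pr mu [pred s | (A s == a) && (Y s == y)]) ->
     forall q : bool -> bool -> R,
       solves mu Yh A Y l q ->
       param_ok q /\
       eq_odds (derived_mass mu Yh A q) (lift_fst A) (lift_fst Y) (@Ytilde S) /\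
       forall q' : bool -> bool -> R, param_ok q' ->
         eq_odds (derived_mass mu Yh A q') (lift_fst A) (lift_fst Y) (@Ytilde S) ->
         derived_loss mu Yh A Y l q <= derived_loss mu Yh A Y l q').
Proof.
split.
  exists (fun J l => \sum_yh \sum_a \sum_y J yh a y * l false y),
         (fun J l yh a => \sum_y J yh a y * (l true y - l false y)),
         (@cond_yhat R).
  move=> S mu Y Yh A l _ _ q; split=> [|a]; last exact: derived_gammaE.
  by rewrite derived_lossE !big_bool /=; ring.
move=> S mu Y Yh A l _ pr_AY_gt0 q [[q_ok _ gamma_eq] q_opt].
split=> //; split; first exact/derived_eq_oddsP.
by move=> q' q'_ok q'_eq_odds; apply: q_opt; apply/feasibleP.
Qed.
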